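(* Let $A$ be a unital JB$^*$-algebra, $T:A\to A$ a bounded linear map which is triple derivable at orthogonal pairs, and $e$ a tripotent in $A$. Let $T_e=P_2(e)T|_{A_2(e)}:A_2(e)\to A_2(e)$. Suppose $\delta:A\to A$ is a triple derivation and $\xi$ is a self-adjoint element of the centre of $A$ with $T(a)=\delta(a)+\xi\circ a$ for all $a\in A$, and suppose $\delta_e:A_2(e)\to A_2(e)$ is a triple derivation and $\xi_e$ is a self-adjoint element of the centre of the JB$^*$-algebra $A_2(e)$ (self-adjoint meaning $\xi_e^{*_e}=\xi_e$) with $T_e(a)=\delta_e(a)+\xi_e\circ_e a$ for all $a\in A_2(e)$. Then $\xi\circ e=\xi_e$.
   Context: A JB$^*$-algebra is a complex Jordan Banach algebra with algebra involution $^*$ such that $\|\{a,a,a\}\|=\|a\|^3$; it is a JB$^*$-triple with triple product $\{x,y,z\}=(x\circ y^* )\circ z+(z\circ y^* )\circ x-(x\circ z)\circ y^*$. Elements $a,b$ are orthogonal if $\{a,b,x\}=0$ for all $x$. A linear map $T$ is triple derivable at orthogonal pairs if $\{T(a),b,c\}+\{a,T(b),c\}+\{a,b,T(c)\}=0$ for all $a,b,c$ with $a\perp b$. A triple derivation satisfies $\delta\{a,b,c\}=\{\delta a,b,c\}+\{a,\delta b,c\}+\{a,b,\delta c\}$. A tripotent is $e$ with $\{e,e,e\}=e$; $A_2(e)=\{x:\{e,e,x\}=x\}$ with Peirce projection $P_2(e)$; $A_2(e)$ is a unital JB$^*$-algebra with product $x\circ_e y=\{x,e,y\}$ and involution $x^{*_e}=\{e,x,e\}$.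 The centre of a JB$^*$-algebra $B$ is the set of $z$ with $(z\circ c)\circ y=z\circ(c\circ y)$ for all $c,y\in B$. *)

From mathcomp Require Import all_boot all_algebra.
From mathcomp Require Import all_classical all_reals all_analysis.
From mathcomp.real_closed Require Export complex.
Export GRing.Theory Num.Theory.
Export numFieldNormedType.Exports.
Set Implicit Arguments. Unset Strict Implicit. Unset Printing Implicit Defensive.
Local Open Scope ring_scope.
Local Open Scope complex_scope.

Section JB.
Variable R : realType.
Variable V : completeNormedModType R[i].
Variable jm : V -> V -> V.   (* Jordan product  x o y *)
Variable st : V -> V.        (* involution  x^* *)

Definition tp (x y z : V) : V :=
  jm (jm x (st y)) z + jm (jm z (st y)) x - jm (jm x z) (st y).

Definition is_unital_JBstar_algebra (u : V) : Prop :=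
     (forall (a : R[i]) x y z, jm (a *: x + y) z = a *: jm x z + jm y z)
  /\ (forall x y, jm x y = jm y x)
  /\ (forall x y, jm (jm x y) (jm x x) = jm x (jm y (jm x x)))
  /\ (forall x y, `|jm x y| <= `|x| * `|y|)
  /\ (forall x, jm u x = x)
  /\ (forall x, st (st x) = x)
  /\ (forall (a : R[i]) x y, st (a *: x + y) = a^* *: st x + st y)
  /\ (forall x y, st (jm x y) = jm (st x) (st y))
  /\ (forall x, `|tp x x x| = `|x| ^+ 3).

Definition orthogonal (a b : V) : Prop := forall x, tp a b x = 0.

Definition triple_derivable_at_orthogonal_pairs (T : V -> V) : Prop :=
  forall a b c, orthogonal a b -> tp (T a) b c + tp a (T b) c + tp a b (T c) = 0.

Definition lin_map (T : V -> V) : Prop :=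
  forall (a : R[i]) x y, T (a *: x + y) = a *: T x + T y.

Definition bounded_linear (T : V -> V) : Prop :=
  lin_map T /\ exists M : R, forall x, `|T x| <= M%:C * `|x|.

Definition triple_derivation (d : V -> V) : Prop :=
  lin_map d /\
  forall a b c, d (tp a b c) = tp (d a) b c + tp a (d b) c + tp a b (d c).

Definition tripotent (e : V) : Prop := tp e e e = e.

(* Peirce-2 subspace A_2(e) and Peirce projection P_2(e) = Q(e)^2 *)
Definition A2 (e x : V) : Prop := tp e e x = x.
Definition P2 (e x : V) : V := tp e (tp e x e) e.

(* the JB*-algebra structure of A_2(e) *)
Definition jm_e (e : V) (x y : V) : V := tp x e y.
Definition st_e (e : V) (x : V) : V := tp e x e.
Definition tp_e (e x y z : V) : V :=
  jm_e e (jm_e e x (st_e e y)) z + jm_e e (jm_e e z (st_e e y)) x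
  - jm_e e (jm_e e x z) (st_e e y).

(* triple derivation of A_2(e): a map A_2(e) -> A_2(e) (values off A_2(e) irrelevant) *)
Definition triple_derivation_on_A2 (e : V) (d : V -> V) : Prop :=
  [/\ (forall x, A2 e x -> A2 e (d x)),
      (forall (a : R[i]) x y, A2 e x -> A2 e y -> d (a *: x + y) = a *: d x + d y)
    & (forall a b c, A2 e a -> A2 e b -> A2 e c ->
         d (tp_e e a b c) = tp_e e (d a) b c + tp_e e a (d b) c + tp_e e a b (d c))].

Definition in_centre (z : V) : Prop := forall c y, jm (jm z c) y = jm z (jm c y).
Definition in_centre_A2 (e z : V) : Prop :=
  A2 e z /\ forall c y, A2 e c -> A2 e y -> jm_e e (jm_e e z c) y = jm_e e z (jm_e e c y).

End JB.

From mathcomp Require Import all_boot all_algebra.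
From mathcomp Require Import all_classical all_reals all_analysis.
From mathcomp.real_closed Require Import complex.
Import GRing.Theory Num.Theory.
Import numFieldNormedType.Exports.
Local Open Scope ring_scope.
Local Open Scope complex_scope.
Set Implicit Arguments.
Unset Strict Implicit.

(* Write Q(e) x := {e,x,e}, L(e,e) x := {e,e,x}, so that P_2(e) = Q(e)^2.
   The proof compares the two decompositions of T at the tripotent e.
   - Every triple derivation d of A satisfies d e = 2 L(e,e)(d e) + Q(e)(d e);
     together with the Peirce identity Q(e) L(e,e) = Q(e) this gives
     Q(e)^2 (d e) = - Q(e)(d e).
   - e is the unit of A_2(e), so a triple derivation d_e of A_2(e) satisfies
     Q(e)(d_e e) = - d_e e.
   - A self-adjoint central xi satisfies Q(e)(xi o e) = xi o e, while
     xi_e = xi_e^{*_e} = Q(e) xi_e and xi_e o_e e = L(e,e) xi_e = xi_e by hypothesis.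
   Evaluating P_2(e) T e in both ways yields z := xi o e - xi_e = d_e e - P_2(e) d e,
   hence Q(e) z = z by the third item and Q(e) z = - z by the first two; so z = 0.
   The only nontrivial algebra is two Peirce identities,
   {e,f,{e,w,e}} = {{e,f,e},w,e} = {e,{f,e,w},e}, which hold in every Jordan
   algebra.  They are proved by a small certificate checker: an identity holds
   if some integer multiple of it is, after expansion into commutative
   non-associative monomials, a Z-combination of instances of the linearized
   Jordan identity. *)

(* Terms and monomials of the free commutative non-associative ring. *)
Inductive jterm : Type :=
  | TVar of nat | TAdd of jterm & jterm | TOpp of jterm | TMul of jterm & jterm.
Inductive jmon : Type := MVar of nat | MMul of jmon & jmon.

(* A total order on monomials, used to choose a representative of a x b = b x a. *)
Fixpoint mon_cmp (a b : jmon) : comparison :=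
  match a, b with
  | MVar n, MVar m => if (n < m)%N then Lt else if (m < n)%N then Gt else Eq
  | MVar _, MMul _ _ => Lt
  | MMul _ _, MVar _ => Gt
  | MMul a1 a2, MMul b1 b2 =>
      match mon_cmp a1 b1 with Eq => mon_cmp a2 b2 | c => c end
  end.

Lemma mon_cmp_eq a b : mon_cmp a b = Eq -> a = b.
Proof.
elim: a b => [n|a1 IH1 a2 IH2] [m|b1 b2] //=; first by case: ltngtP => // ->.
by case E: (mon_cmp a1 b1) => // /IH2 ->; rewrite (IH1 _ E).
Qed.

Definition mon_mul (a b : jmon) : jmon :=
  if mon_cmp a b is Gt then MMul b a else MMul a b.

(* Polynomials as unreduced lists of (coefficient, monomial) pairs. *)
Definition jpoly := seq (int * jmon).

Fixpoint expand (t : jterm) : jpoly :=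
  match t with
  | TVar n => [:: (1%Z, MVar n)]
  | TAdd a b => expand a ++ expand b
  | TOpp a => [seq (- p.1, p.2) | p <- expand a]
  | TMul a b => [seq (p.1 * q.1, mon_mul p.2 q.2) | p <- expand a, q <- expand b]
  end.

Fixpoint insert_mon (p : int * jmon) (l : jpoly) : jpoly :=
  match l with
  | [::] => [:: p]
  | q :: l' =>
      if mon_cmp p.2 q.2 is Eq then (p.1 + q.1, q.2) :: l' else q :: insert_mon p l'
  end.

Definition collect (l : jpoly) : jpoly := foldr insert_mon [::] l.

Definition scale_poly (k : int) (l : jpoly) : jpoly := [seq (k * p.1, p.2) | p <- l].

Definition jordan_term (x d : jterm) : jterm :=
  TAdd (TMul (TMul x d) (TMul x x)) (TOpp (TMul x (TMul d (TMul x x)))).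

Definition lin_jordan_term (a b c d : jterm) : jterm :=
  let part p q r := TAdd (TMul (TMul p d) (TMul q r)) (TOpp (TMul p (TMul d (TMul q r)))) in
  TAdd (part a b c) (TAdd (part b c a) (part c a b)).

Inductive jrel : Type :=
  | RJordan of jterm & jterm
  | RLin of jterm & jterm & jterm & jterm
  | RLinMul of jterm & jterm & jterm & jterm & jterm.

Definition jrel_term (r : jrel) : jterm :=
  match r with
  | RJordan x d => jordan_term x d
  | RLin a b c d => lin_jordan_term a b c d
  | RLinMul a b c d v => TMul (lin_jordan_term a b c d) v
  end.

Definition certified (k : int) (t : jterm) (rs : seq (int * jrel)) : bool :=
  all (fun p => p.1 == 0) (collect (scale_poly k (expand t) ++
     flatten [seq scale_poly (- r.1) (expand (jrel_term r.2)) | r <- rs])).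

Definition jt_term (a b c : jterm) : jterm :=
  TAdd (TAdd (TMul (TMul a b) c) (TMul (TMul c b) a)) (TOpp (TMul (TMul a c) b)).

Section CommutativeProducts.
Variable F : numFieldType.
Variable V : lmodType F.
Variable jm : V -> V -> V.
Hypothesis jmDl : forall x y z, jm (x + y) z = jm x z + jm y z.
Hypothesis jmC : forall x y, jm x y = jm y x.

Lemma jm0l z : jm 0 z = 0.
Proof. by apply: (addrI (jm 0 z)); rewrite -jmDl !addr0. Qed.

Lemma jmNl x z : jm (- x) z = - jm x z.
Proof. by apply: (addrI (jm x z)); rewrite -jmDl !subrr jm0l. Qed.

Lemma jmMnl x n z : jm (x *+ n) z = jm x z *+ n.
Proof. by elim: n => [|n IH]; rewrite ?mulr0n ?jm0l // !mulrS jmDl IH. Qed.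

Lemma jmMzl x c z : jm (x *~ c) z = jm x z *~ c.
Proof. by case: c => n; rewrite ?NegzE ?mulrNz ?jmNl jmMnl. Qed.

Lemma jm_suml (l : jpoly) (f : int * jmon -> V) z :
  jm (\sum_(p <- l) f p) z = \sum_(p <- l) jm (f p) z.
Proof. by elim: l => [|p l IH]; rewrite ?big_nil ?jm0l // !big_cons jmDl IH. Qed.

Section Interpretation.
Variable env : seq V.

Fixpoint interp (t : jterm) : V :=
  match t with
  | TVar n => nth 0 env n
  | TAdd a b => interp a + interp b
  | TOpp a => - interp a
  | TMul a b => jm (interp a) (interp b)
  end.

Fixpoint interp_mon (m : jmon) : V :=
  match m with MVar n => nth 0 env n | MMul a b => jm (interp_mon a) (interp_mon b) end.

Definition interp_poly (l : jpoly) : V := \sum_(p <- l) interp_mon p.2 *~ p.1.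

Lemma interp_poly_cat l1 l2 : interp_poly (l1 ++ l2) = interp_poly l1 + interp_poly l2.
Proof. by rewrite /interp_poly big_cat. Qed.

Lemma interp_scale_poly k l : interp_poly (scale_poly k l) = interp_poly l *~ k.
Proof.
rewrite /interp_poly big_map mulrz_suml; apply: eq_bigr => p _ /=.
by rewrite mulrzA mulrzAC.
Qed.

Lemma interp_expand t : interp_poly (expand t) = interp t.
Proof.
elim: t => [n|a IHa b IHb|a IHa|a IHa b IHb] /=.
- by rewrite /interp_poly big_seq1.
- by rewrite interp_poly_cat IHa IHb.
- rewrite -IHa /interp_poly big_map -sumrN; apply: eq_bigr => p _ /=.
  by rewrite mulrNz.
- rewrite -IHa -IHb /interp_poly big_allpairs_dep jm_suml; apply: eq_bigr => p _.
  rewrite jmC jm_suml; apply: eq_bigr => q _ /=.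
  have -> : interp_mon (mon_mul p.2 q.2) = jm (interp_mon p.2) (interp_mon q.2).
    by rewrite /mon_mul; case: (mon_cmp p.2 q.2) => //=; rewrite jmC.
  by rewrite jmMzl [jm (interp_mon q.2) _]jmC jmMzl -mulrzA.
Qed.

Lemma interp_collect l : interp_poly (collect l) = interp_poly l.
Proof.
rewrite /interp_poly; elim: l => [|p l IH] //=; rewrite big_cons -IH.
elim: (collect l) => [|q l' IH'] /=; first by rewrite big_seq1 big_nil addr0.
case E: (mon_cmp p.2 q.2) => /=; rewrite !big_cons /=.
- by rewrite (mon_cmp_eq E) mulrzDr addrA.
- by rewrite IH' addrCA.
- by rewrite IH' addrCA.
Qed.

Lemma interp_poly_zero l : all (fun p => p.1 == 0) l -> interp_poly l = 0.
Proof.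
elim: l => [|p l IH] /=; first by rewrite /interp_poly big_nil.
by case/andP => /eqP p0 /IH; rewrite /interp_poly big_cons p0 mulr0z add0r.
Qed.

Fixpoint all_vanish (rs : seq (int * jrel)) : Prop :=
  if rs is r :: rs' then interp (jrel_term r.2) = 0 /\ all_vanish rs' else True.

Lemma certified_sound k t rs :
  k != 0 -> all_vanish rs -> certified k t rs -> interp t = 0.
Proof.
move=> k0 rs0 /interp_poly_zero.
rewrite interp_collect interp_poly_cat interp_scale_poly interp_expand.
have -> : interp_poly (flatten
    [seq scale_poly (- r.1) (expand (jrel_term r.2)) | r <- rs]) = 0.
  elim: rs rs0 => [|r rs IH] /=; first by rewrite /interp_poly big_nil.
  case=> r0 /IH rs0.
  by rewrite interp_poly_cat rs0 interp_scale_poly interp_expand r0 mul0rz addr0.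
by rewrite addr0 -scaler_int => /eqP; rewrite scaler_eq0 intr_eq0 (negPf k0) => /eqP.
Qed.
End Interpretation.

Section JordanIdentities.
Hypothesis jordan : forall x y, jm (jm x y) (jm x x) = jm x (jm y (jm x x)).

Lemma lin_jordan (a b c d : V) :
  interp [:: a; b; c; d] (lin_jordan_term (TVar 0) (TVar 1) (TVar 2) (TVar 3)) = 0.
Proof.
pose A := TVar 0; pose B := TVar 1; pose C := TVar 2; pose D := TVar 3.
apply: (@certified_sound _ 2%Z _ [:: (1%Z, RJordan (TAdd A (TAdd B C)) D);
  ((-1)%Z, RJordan (TAdd A B) D); ((-1)%Z, RJordan (TAdd A C) D);
  ((-1)%Z, RJordan (TAdd B C) D); (1%Z, RJordan A D); (1%Z, RJordan B D);
  (1%Z, RJordan C D)]).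
- by [].
- by do !split; rewrite /= jordan subrr.
- by vm_compute.
Qed.

Lemma jrel_zero env r : interp env (jrel_term r) = 0.
Proof.
have lin a b c d : interp env (lin_jordan_term a b c d) = 0.
  exact: (lin_jordan (interp env a) (interp env b) (interp env c) (interp env d)).
case: r => [x d|a b c d|a b c d v]; first by rewrite /= jordan subrr.
  exact: lin.
by change (jm (interp env (lin_jordan_term a b c d)) (interp env v) = 0); rewrite lin jm0l.
Qed.

Lemma all_vanish_jrel env rs : all_vanish env rs.
Proof. by elim: rs => [|r rs IH] //=; split; first exact: jrel_zero. Qed.

(* The Jordan triple product of V; {a,b,c} = jt a b^* c in a Jordan *-algebra. *)
Definition jt (a b c : V) : V := jm (jm a b) c + jm (jm c b) a - jm (jm a c) b.

Lemma jt_inner_quadratic (e f w : V) : jt e f (jt e w e) = jt (jt e f e) w e.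
Proof.
apply/eqP; rewrite -subr_eq0; apply/eqP.
pose E := TVar 0; pose G := TVar 1; pose W := TVar 2.
apply: (@certified_sound [:: e; f; w] 3%Z
  (TAdd (jt_term E G (jt_term E W E)) (TOpp (jt_term (jt_term E G E) W E)))
[:: (3%Z, RLinMul E E G W E); ((-6)%Z, RLinMul W G E E E);
    (3%Z, RLinMul W E E E G); ((-4)%Z, RLinMul E E E W G);
    ((-2)%Z, RLinMul E E E G W); ((-3)%Z, RLin G E W (TMul E E));
    (9%Z, RLin W G (TMul E E) E); ((-3)%Z, RLin E (TMul E E) G W);
    (3%Z, RLin E (TMul W G) E E); ((-6)%Z, RLin W E (TMul E G) E);
    (6%Z, RLin E (TMul E G) E W); ((-3)%Z, RLin E W E (TMul E G))]).
- by [].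
- exact: all_vanish_jrel.
- by vm_compute.
Qed.

Lemma jt_outer_quadratic (e f w : V) : jt e (jt f e w) e = jt (jt e f e) w e.
Proof.
apply/eqP; rewrite -subr_eq0; apply/eqP.
pose E := TVar 0; pose G := TVar 1; pose W := TVar 2.
apply: (@certified_sound [:: e; f; w] 3%Z
  (TAdd (jt_term E (jt_term G E W) E) (TOpp (jt_term (jt_term E G E) W E)))
[:: ((-3)%Z, RLinMul E E G W E); ((-2)%Z, RLinMul E E E W G);
    ((-3)%Z, RLinMul E E W G E); ((-3)%Z, RLinMul E G E E W);
    ((-1)%Z, RLinMul E E E G W); ((-6)%Z, RLin G E W (TMul E E));
    (6%Z, RLin W G (TMul E E) E); (3%Z, RLin (TMul E E) W E G);
    (3%Z, RLin E (TMul W G) E E); (3%Z, RLin E (TMul E G) E W);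
    ((-6)%Z, RLin E W E (TMul E G))]).
- by [].
- exact: all_vanish_jrel.
- by vm_compute.
Qed.
End JordanIdentities.
End CommutativeProducts.

Lemma self_opp_eq0 (F : numFieldType) (V : lmodType F) (x : V) : x = - x -> x = 0.
Proof.
move=> xN; have : 2%:R *: x = 0 by rewrite scaler_nat mulr2n {1}xN addNr.
by move/eqP; rewrite scaler_eq0 pnatr_eq0 /= => /eqP.
Qed.

Lemma addrACA_sub (V : zmodType) (x1 x2 y1 y2 z1 z2 : V) :
  (x1 + x2) + (y1 + y2) - (z1 + z2) = (x1 + y1 - z1) + (x2 + y2 - z2).
Proof. by rewrite opprD (addrACA x1) (addrACA (x1 + y1)). Qed.

(* A derivation evaluated at an idempotent-like element yields x = x + y + x,
   which forces y = - x. *)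
Lemma sandwich_opp (V : zmodType) (x y : V) : x = x + y + x -> y = - x.
Proof.
move=> xyx; apply/eqP; rewrite -addr_eq0; apply/eqP; apply: (addrI x).
by rewrite addr0 addrA -xyx.
Qed.

Section JordanStarAlgebra.
Variable R : realType.
Variable V : completeNormedModType R[i].
Variables (jm : V -> V -> V) (st : V -> V).
Hypothesis jmDZl : forall (a : R[i]) x y z, jm (a *: x + y) z = a *: jm x z + jm y z.
Hypothesis jmC : forall x y, jm x y = jm y x.
Hypothesis jordan : forall x y, jm (jm x y) (jm x x) = jm x (jm y (jm x x)).
Hypothesis stK : forall x, st (st x) = x.
Hypothesis stDZ : forall (a : R[i]) x y, st (a *: x + y) = a^* *: st x + st y.
Hypothesis stM : forall x y, st (jm x y) = jm (st x) (st y).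

Local Notation trip := (tp jm st).
Local Notation jtr := (@jt R[i] V jm).

Lemma jm_addl x y z : jm (x + y) z = jm x z + jm y z.
Proof. by rewrite -[x]scale1r jmDZl !scale1r. Qed.

Lemma jm_oppl x y : jm (- x) y = - jm x y.
Proof. exact: (@jmNl _ _ jm jm_addl). Qed.

Lemma jm_addr x y z : jm x (y + z) = jm x y + jm x z.
Proof. by rewrite jmC jm_addl ![jm _ x]jmC. Qed.

Lemma jm_oppr x y : jm x (- y) = - jm x y.
Proof. by rewrite jmC jm_oppl jmC. Qed.

Lemma st_add x y : st (x + y) = st x + st y.
Proof. by rewrite -[x]scale1r stDZ rmorph1 !scale1r. Qed.

Lemma st_opp x : st (- x) = - st x.
Proof.
have st0 : st 0 = 0 by apply: (addrI (st 0)); rewrite -st_add !addr0.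
by apply: (addrI (st x)); rewrite -st_add !subrr st0.
Qed.

Lemma st_jt a b c : st (jtr a b c) = jtr (st a) (st b) (st c).
Proof. by rewrite /jt st_add st_opp st_add !stM. Qed.

Lemma tp_sym a b c : trip a b c = trip c b a.
Proof. by rewrite /tp (jmC c a) [jm (jm c _) a + _]addrC. Qed.

Lemma tp_addm a b1 b2 c : trip a (b1 + b2) c = trip a b1 c + trip a b2 c.
Proof. by rewrite /tp st_add !jm_addr !jm_addl addrACA_sub. Qed.

Lemma tp_oppm a b c : trip a (- b) c = - trip a b c.
Proof. by rewrite /tp st_opp !jm_oppr !jm_oppl !opprD. Qed.

Lemma jt_central_middle xi a b c :
  in_centre jm xi -> jtr a (jm xi b) c = jm xi (jtr a b c).
Proof.
move=> xiC.
have xiM x y : jm x (jm xi y) = jm xi (jm x y) by rewrite jmC xiC (jmC y x).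
by rewrite /jt !xiM !xiC jm_addr jm_oppr jm_addr.
Qed.

Section Tripotent.
Variable e : V.
Hypothesis He : tripotent jm st e.

Lemma peirce_LQ y : trip e e (trip e y e) = trip e y e.
Proof.
transitivity (trip (trip e e e) y e); last by rewrite He.
exact: (@jt_inner_quadratic _ _ jm jm_addl jmC jordan e (st e) (st y)).
Qed.

Lemma peirce_QL y : trip e (trip e e y) e = trip e y e.
Proof.
transitivity (trip (trip e e e) y e); last by rewrite He.
change (jtr e (st (jtr e (st e) y)) e = jtr (jtr e (st e) e) (st y) e).
rewrite st_jt stK.
exact: (@jt_outer_quadratic _ _ jm jm_addl jmC jordan e (st e) (st y)).
Qed.

Lemma Q_central xi : in_centre jm xi -> st xi = xi -> trip e (jm xi e) e = jm xi e.
Proof.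
move=> xiC xiS; change (jtr e (st (jm xi e)) e = jm xi e).
by rewrite stM xiS jt_central_middle //; congr (jm xi _); exact: He.
Qed.

Lemma derivation_Q2 d :
  triple_derivation jm st d -> trip e (trip e (d e) e) e = - trip e (d e) e.
Proof.
case=> _ dL.
have de : d e = trip e e (d e) + trip e (d e) e + trip e e (d e).
  by rewrite -{1}He dL (tp_sym (d e)).
by apply: sandwich_opp; rewrite {1}de 2!tp_addm !peirce_QL.
Qed.

Lemma derivation_P2 d :
  triple_derivation jm st d -> trip e (P2 jm st e (d e)) e = - P2 jm st e (d e).
Proof.
move=> dD; have Q2d := derivation_Q2 dD.
by rewrite /P2 Q2d tp_oppm Q2d.
Qed.

(* e is the unit of A_2(e), hence a triple derivation d of A_2(e)
   satisfies (d e)^{*_e} = - d e. *)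
Lemma A2_derivation_unit d :
  triple_derivation_on_A2 jm st e d -> trip e (d e) e = - d e.
Proof.
case=> dA2 _ dL.
have eA2 : A2 jm st e e := He.
have unit_outer x : A2 jm st e x -> tp_e jm st e x e e = x.
  move=> xA2; have xA2' : trip x e e = x by rewrite tp_sym.
  by rewrite /tp_e /jm_e /st_e !He; do 2!rewrite ?xA2 ?xA2'; exact: addrK.
have unit_right x : A2 jm st e x -> tp_e jm st e e e x = x.
  move=> xA2; have xA2' : trip x e e = x by rewrite tp_sym.
  by rewrite /tp_e /jm_e /st_e !He; do 2!rewrite ?xA2 ?xA2'; exact: addrK.
have unit_inner x : tp_e jm st e e x e = trip e x e.
  rewrite /tp_e /jm_e /st_e !He !peirce_LQ !(tp_sym (trip e x e) e e).
  by rewrite !peirce_LQ addrK.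
have := dL e e e eA2 eA2 eA2.
rewrite (unit_outer e eA2) (unit_outer _ (dA2 e eA2)) unit_inner.
by rewrite (unit_right _ (dA2 e eA2)); exact: sandwich_opp.
Qed.
End Tripotent.
End JordanStarAlgebra.

Theorem mainTheorem12 (R : realType) (V : completeNormedModType R[i])
  (jm : V -> V -> V) (st : V -> V) (u : V)
  (HA : is_unital_JBstar_algebra jm st u)
  (T : V -> V) (HTb : bounded_linear T)
  (HTo : triple_derivable_at_orthogonal_pairs jm st T)
  (e : V) (He : tripotent jm st e)
  (delta : V -> V) (xi : V)
  (Hdelta : triple_derivation jm st delta)
  (Hxi_c : in_centre jm xi) (Hxi_s : st xi = xi)
  (HT : forall a, T a = delta a + jm xi a)
  (delta_e : V -> V) (xi_e : V)
  (Hdelta_e : triple_derivation_on_A2 jm st e delta_e)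
  (Hxie_c : in_centre_A2 jm st e xi_e) (Hxie_s : st_e jm st e xi_e = xi_e)
  (HTe : forall a, A2 jm st e a -> P2 jm st e (T a) = delta_e a + jm_e jm st e xi_e a) :
  jm xi e = xi_e.
Proof.
case: HA => jmDZl [jmC [jordan [_ [_ [stK [stDZ [stM _]]]]]]].
have P2_delta := derivation_P2 jmDZl jmC jordan stK stDZ stM He Hdelta.
have Q_delta_e := A2_derivation_unit jmDZl jmC jordan He Hdelta_e.
have Q_xi := Q_central jmDZl jmC stM He Hxi_c Hxi_s.
have Q_xi_e : tp jm st e xi_e e = xi_e := Hxie_s.
have L_xi_e : tp jm st e e xi_e = xi_e := Hxie_c.1.
have tp_addm := tp_addm jmDZl jmC stDZ; have tp_oppm := tp_oppm jmDZl jmC stDZ.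
set z := jm xi e - xi_e.
have Qz_fixed : tp jm st e z e = z by rewrite tp_addm tp_oppm Q_xi Q_xi_e.
(* ... and, by the two decompositions of P_2(e) T e, z = delta_e e - P_2(e) (delta e) ... *)
have z_def : z = delta_e e - P2 jm st e (delta e).
  have := HTe e He; rewrite HT /P2 /jm_e 2!tp_addm !Q_xi (tp_sym _ jmC xi_e) L_xi_e.
  by move=> PTe; rewrite /z -[jm xi e](addKr (P2 jm st e (delta e))) PTe addrA addrK addrC.
have Qz_opp : tp jm st e z e = - z.
  by rewrite z_def tp_addm tp_oppm Q_delta_e P2_delta (opprD (delta_e e)).
apply/eqP; rewrite -subr_eq0 -/z; apply/eqP; apply: self_opp_eq0.
by rewrite -{1}Qz_fixed Qz_opp.
Qed.
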